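(* Let $\gamma\in(0,1)$. For every $\varepsilon>0$ there exists a constant $C=C(\gamma,\varepsilon)$ such that the following holds. Let $T\ge1$, let $\xi=(\xi_1,\dots,\xi_T)$ be i.i.d. Bernoulli($\gamma$) random variables, let $N:\{0,1\}^T\to\{0,1,\dots,T\}$ be any deterministic function, and set $S(\xi,m)=\sum_{i=1}^m\xi_i$. If $\mathbb E[N(\xi)]\ge C$, then $$(\gamma-\varepsilon)\,\mathbb E[N(\xi)]\le\mathbb E[S(\xi,N(\xi))]\le(\gamma+\varepsilon)\,\mathbb E[N(\xi)].$$ (That is, $\mathbb E[S(\xi,N(\xi))]/\mathbb E[N(\xi)]\to\gamma$ as $\mathbb E[N(\xi)]\to\infty$, uniformly in $T$ and $N$.) *)

From mathcomp Require Import all_boot all_order all_algebra.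
Set Implicit Arguments. Unset Strict Implicit. Unset Printing Implicit Defensive.
Import Order.TTheory GRing.Theory Num.Theory.
Local Open Scope ring_scope.

Definition bern_weight (R : realFieldType) (gamma : R) (T : nat)
  (x : {ffun 'I_T -> bool}) : R :=
  \prod_(i < T) (if x i then gamma else 1 - gamma).

Definition bern_expect (R : realFieldType) (gamma : R) (T : nat)
  (f : {ffun 'I_T -> bool} -> R) : R :=
  \sum_(x : {ffun 'I_T -> bool}) bern_weight gamma x * f x.

(* S(x, m) = sum_{i=1}^m x_i  (0-based: coordinates with index < m). *)
Definition partial_sum (T : nat) (x : {ffun 'I_T -> bool}) (m : nat) : nat :=
  \sum_(i < T | (i < m)%N) (x i : nat).

From mathcomp Require Import all_boot all_order all_algebra.
From mathcomp Require Import reals exp sequences ring lra.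
Set Implicit Arguments. Unset Strict Implicit. Unset Printing Implicit Defensive.
Import Order.TTheory GRing.Theory Num.Theory.
Local Open Scope ring_scope.

(* Put e = eps/2. For the step d b = b - (gamma + e), or d b = (gamma - e) - b,
   the walk W_m = sum_(i < m) d xi_i has steps bounded by 1 + e and drift -e,
   so for a small tilt lam the moment generating function E[exp (lam d)] is at
   most q = 1 - lam e / 2 < 1. Since N is an arbitrary function and not a
   stopping time, we use the crude bound
     W_N <= lam^-1 exp (lam W_N) <= lam^-1 sum_(m <= T) exp (lam W_m),
   whose expectation is lam^-1 sum_m E[exp (lam d)]^m <= 2 / (lam^2 e) by
   independence. Hence E[S(xi, N)] - (gamma +- e) E[N] is bounded by a constant
   depending only on eps, which is at most e E[N] once E[N] is large. *)

Section BernoulliWalk.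
Variable R : realType.
Implicit Types (g e lam c s : R) (d : bool -> R).

Lemma expR_le_quadratic (x : R) : x <= 1 / 2 -> expR x <= 1 + x + 2 * x ^+ 2.
Proof.
move=> x_le; have x1 : 0 < 1 - x by lra.
have expRN_ge : 1 - x <= (expR x)^-1 by rewrite -expRN; apply: expR_ge1Dx.
have expR_le : expR x <= (1 - x)^-1.
  by rewrite -(invrK (expR x)) lef_pV2 ?posrE ?invr_gt0 ?expR_gt0.
apply: (le_trans expR_le).
rewrite -(@ler_pM2l _ (1 - x)) // mulfV ?gt_eqF //.
have : 0 <= x ^+ 2 * (1 - 2 * x) by rewrite mulr_ge0 ?sqr_ge0 //; lra.
nra.
Qed.

Lemma sum_expr_le (q : R) n : 0 <= q < 1 -> \sum_(m < n) q ^+ m <= (1 - q)^-1.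
Proof.
move=> /andP[q0 q1]; have q1' : 0 < 1 - q by lra.
rewrite -(@ler_pM2l _ (1 - q)) // mulfV ?gt_eqF //.
have -> : (1 - q) * \sum_(m < n) q ^+ m = 1 - q ^+ n.
  by rewrite -opprB mulNr -subrX1 opprB.
by have := exprn_ge0 n q0; lra.
Qed.

Lemma le_invr_mul_expR lam y : 0 < lam -> y <= lam^-1 * expR (lam * y).
Proof.
move=> lam0; rewrite -(@ler_pM2l _ lam) // mulrA mulfV ?gt_eqF // mul1r.
by have := expR_ge1Dx (lam * y); lra.
Qed.

(* Chosen so that lam^2 (1 + e)^2 = lam e / 4: the second order term 2 (lam d)^2
   of the mgf then uses up at most half of the drift lam e. *)
Definition tilt e := e / (4 * (1 + e) ^+ 2).

Lemma tilt_gt0 e : 0 < e -> 0 < tilt e.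
Proof. by move=> e0; rewrite divr_gt0 // mulr_gt0 // exprn_gt0 //; lra. Qed.

Lemma tilt_mul_sqr e : 0 < e -> tilt e * (1 + e) ^+ 2 = e / 4.
Proof. by move=> e0; rewrite /tilt; field; rewrite gt_eqF //; lra. Qed.

Lemma tilt_mul_le e : 0 < e -> tilt e * (1 + e) <= 1 / 4.
Proof.
move=> e0; have := tilt_mul_sqr e0; have := tilt_gt0 e0.
by rewrite expr2 mulrA; nra.
Qed.

Definition bern_mgf g d lam :=
  g * expR (lam * d true) + (1 - g) * expR (lam * d false).

Lemma bern_mgf_ge0 g d lam : 0 <= g <= 1 -> 0 <= bern_mgf g d lam.
Proof.
by case/andP=> g0 g1; rewrite addr_ge0 // mulr_ge0 ?expR_ge0 //; lra.
Qed.

Lemma bern_mgf_tilt_le g e d : 0 <= g <= 1 -> 0 < e ->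
  (forall b, `|d b| <= 1 + e) -> g * d true + (1 - g) * d false = - e ->
  bern_mgf g d (tilt e) <= 1 - tilt e * e / 2.
Proof.
move=> /andP[g0 g1] e0 d_le mean_d; set lam := tilt e.
have lam0 : 0 < lam := tilt_gt0 e0.
have step_le b : expR (lam * d b) <= 1 + lam * d b + lam * e / 2.
  have := d_le b; rewrite ler_norml => /andP[lo hi].
  have := tilt_mul_le e0; have := tilt_mul_sqr e0; rewrite -/lam => sq ltq.
  apply: (le_trans (expR_le_quadratic _)); first by nra.
  have : (lam * d b) ^+ 2 <= lam * (e / 4).
    have db2 : d b ^+ 2 <= (1 + e) ^+ 2 by nra.
    by rewrite -sq exprMn expr2 -mulrA !ler_pM2l.
  lra.
have mix : g * (1 + lam * d true + lam * e / 2)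
    + (1 - g) * (1 + lam * d false + lam * e / 2) = 1 - lam * e / 2.
  transitivity (1 + lam * (g * d true + (1 - g) * d false) + lam * e / 2).
    by ring.
  by rewrite mean_d; field.
rewrite /bern_mgf -/lam -mix.
by apply: lerD; apply: ler_wpM2l => //; lra.
Qed.

Lemma bern_weight_ge0 g T (x : {ffun 'I_T -> bool}) :
  0 <= g <= 1 -> 0 <= bern_weight g x.
Proof. by case/andP=> g0 g1; apply: prodr_ge0 => i _; case: (x i); lra. Qed.

Lemma ler_bern_expect g T (f h : {ffun 'I_T -> bool} -> R) :
  0 <= g <= 1 -> (forall x, f x <= h x) -> bern_expect g f <= bern_expect g h.
Proof.
by move=> g01 fh; apply: ler_sum => x _; rewrite ler_wpM2l ?bern_weight_ge0.
Qed.

Lemma bern_expectZ g T c (f : {ffun 'I_T -> bool} -> R) :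
  bern_expect g (fun x => c * f x) = c * bern_expect g f.
Proof. by rewrite /bern_expect mulr_sumr; apply: eq_bigr => x _; ring. Qed.

Lemma bern_expectB g T (f h : {ffun 'I_T -> bool} -> R) :
  bern_expect g (fun x => f x - h x) = bern_expect g f - bern_expect g h.
Proof. by rewrite /bern_expect -sumrB; apply: eq_bigr => x _; ring. Qed.

Lemma bern_expect_sum g T n (F : 'I_n -> {ffun 'I_T -> bool} -> R) :
  bern_expect g (fun x => \sum_(m < n) F m x) = \sum_(m < n) bern_expect g (F m).
Proof.
rewrite /bern_expect exchange_big /=.
by apply: eq_bigr => x _; rewrite mulr_sumr.
Qed.

Lemma bern_expect_prod_prefix g T m (f : bool -> R) : (m <= T)%N ->
  bern_expect g (fun x => \prod_(i < T | (i < m)%N) f (x i))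
  = (g * f true + (1 - g) * f false) ^+ m.
Proof.
move=> mT; rewrite /bern_expect /bern_weight.
under eq_bigr => x _ do rewrite [X in _ * X]big_mkcond -big_split /=.
rewrite -(bigA_distr_bigA (fun (i : 'I_T) (b : bool) =>
  (if b then g else 1 - g) * (if (i < m)%N then f b else 1))) /=.
under eq_bigr => i _ do rewrite big_bool /=.
rewrite (eq_bigr (fun i : 'I_T =>
    if (i < m)%N then g * f true + (1 - g) * f false else 1)); last first.
  by move=> i _; case: ifP => _ //; ring.
by rewrite -big_mkcond /= (big_ord_narrow mT) prodr_const card_ord.
Qed.

Lemma bern_expect_expR_prefix_sum g d lam T m : (m <= T)%N ->
  bern_expect g (fun x => expR (lam * \sum_(i < T | (i < m)%N) d (x i)))
  = bern_mgf g d lam ^+ m.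
Proof.
move=> mT; rewrite -(bern_expect_prod_prefix g (fun b => expR (lam * d b)) mT).
by apply: eq_bigr => x _; rewrite mulr_sumr expR_sum.
Qed.

Section PrefixSum.
Variables (T : nat) (N : {ffun 'I_T -> bool} -> nat).
Hypothesis N_le : forall x, (N x <= T)%N.

Lemma bern_expect_prefix_sum_le g d lam : 0 <= g <= 1 -> 0 < lam ->
  bern_expect g (fun x => \sum_(i < T | (i < N x)%N) d (x i))
  <= lam^-1 * \sum_(m < T.+1) bern_mgf g d lam ^+ m.
Proof.
move=> g01 lam0; have lamV0 : 0 < lam^-1 by rewrite invr_gt0.
pose W (x : {ffun 'I_T -> bool}) m := \sum_(i < T | (i < m)%N) d (x i).
have WN_le x : W x (N x) <= lam^-1 * \sum_(m < T.+1) expR (lam * W x m).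
  have Nx : (N x < T.+1)%N by rewrite ltnS.
  apply: (le_trans (le_invr_mul_expR _ lam0)).
  rewrite ler_pM2l // (bigD1 (Ordinal Nx)) //= lerDl.
  by apply: sumr_ge0 => m _; apply: expR_ge0.
apply: (le_trans (ler_bern_expect g01 WN_le)).
rewrite bern_expectZ bern_expect_sum ler_pM2l //.
by rewrite (eq_bigr _ (fun m _ =>
  bern_expect_expR_prefix_sum g d lam (ltnSE (ltn_ord m)))).
Qed.

Lemma bern_expect_prefix_sum_drift_le g e d : 0 <= g <= 1 -> 0 < e ->
  (forall b, `|d b| <= 1 + e) -> g * d true + (1 - g) * d false = - e ->
  bern_expect g (fun x => \sum_(i < T | (i < N x)%N) d (x i))
  <= 2 / (tilt e ^+ 2 * e).
Proof.
move=> g01 e0 d_le mean_d; have lam0 := tilt_gt0 e0.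
apply: (le_trans (bern_expect_prefix_sum_le _ g01 lam0)).
have lame0 : 0 < tilt e * e by rewrite mulr_gt0.
set q := 1 - tilt e * e / 2.
have q01 : 0 <= q < 1.
  by have := tilt_mul_le e0; rewrite /q => ?; apply/andP; split; nra.
have -> : 2 / (tilt e ^+ 2 * e) = (tilt e)^-1 * (1 - q)^-1.
  by rewrite /q; field; rewrite !gt_eqF //; lra.
rewrite ler_pM2l ?invr_gt0 //.
apply: le_trans (sum_expr_le T.+1 q01); apply: ler_sum => m _.
by rewrite lerXn2r ?nnegrE ?bern_mgf_ge0 ?bern_mgf_tilt_le //; case/andP: q01.
Qed.

Lemma bern_expect_centered_prefix_sum g c s :
  bern_expect g (fun x => \sum_(i < T | (i < N x)%N) s * ((x i : nat)%:R - c))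
  = s * (bern_expect g (fun x => (partial_sum x (N x))%:R)
         - c * bern_expect g (fun x => (N x)%:R)).
Proof.
rewrite -bern_expectZ -bern_expectB -bern_expectZ.
apply: eq_bigr => x _; congr (_ * _).
rewrite -mulr_sumr sumrB /partial_sum natr_sum; congr (_ * (_ - _)).
by rewrite (big_ord_narrow (N_le x)) sumr_const cardT size_enum_ord mulr_natr.
Qed.

Lemma partial_sum_deviation_le g e c s : 0 <= g <= 1 -> 0 < e ->
  (forall b : bool, `|s * ((b : nat)%:R - c)| <= 1 + e) -> s * (g - c) = - e ->
  s * (bern_expect g (fun x => (partial_sum x (N x))%:R)
       - c * bern_expect g (fun x => (N x)%:R)) <= 2 / (tilt e ^+ 2 * e).
Proof.
move=> g01 e0 step_le drift; rewrite -bern_expect_centered_prefix_sum.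
apply: (bern_expect_prefix_sum_drift_le (d := fun b => s * ((b : nat)%:R - c)))
  => //=.
by rewrite mulr1n mulr0n -drift; ring.
Qed.

End PrefixSum.
End BernoulliWalk.

Theorem mainTheorem11 (R : realType) (gamma : R) :
  0 < gamma < 1 ->
  forall eps : R, 0 < eps ->
  exists C : R, forall (T : nat) (N : {ffun 'I_T -> bool} -> nat),
    (1 <= T)%N ->
    (forall x, (N x <= T)%N) ->
    C <= bern_expect gamma (fun x => (N x)%:R) ->
    (gamma - eps) * bern_expect gamma (fun x => (N x)%:R)
      <= bern_expect gamma (fun x => (partial_sum x (N x))%:R)
    /\ bern_expect gamma (fun x => (partial_sum x (N x))%:R)
      <= (gamma + eps) * bern_expect gamma (fun x => (N x)%:R).
Proof.
move=> /andP[g0 g1] eps eps0; set e := eps / 2.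
have e0 : 0 < e by rewrite divr_gt0.
set K := 2 / (tilt e ^+ 2 * e).
exists (K / e) => T N _ N_le C_le; have g01 : 0 <= gamma <= 1 by lra.
set EN := bern_expect gamma _ in C_le *; set ES := bern_expect gamma _.
have K_le : K <= e * EN by rewrite -ler_pdivrMl // mulrC.
have step (c : R) (b : bool) :
    gamma - e <= c <= gamma + e -> `|(b : nat)%:R - c| <= 1 + e.
  by case/andP=> ? ?; case: b => /=; rewrite ler_norml; apply/andP; split; lra.
have upper : 1 * (ES - (gamma + e) * EN) <= K.
  apply: partial_sum_deviation_le => // [b|]; last by ring.
  by rewrite mul1r step //; apply/andP; split; lra.
have lower : -1 * (ES - (gamma - e) * EN) <= K.
  apply: partial_sum_deviation_le => // [b|]; last by ring.
  by rewrite mulN1r normrN step //; apply/andP; split; lra.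
have -> : eps = 2 * e by rewrite /e; field.
by split; lra.
Qed.
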